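(* Let $L\subseteq B_i$ be an SINR-feasible set of links contained in a single bucket $B_i$. Then there is a constant $C$ depending only on $\alpha,\beta,\varepsilon$ such that for every $e\in B_i$, \[\sum_{\{e'\in L: d_{e'}\ge d_e\}}\bar a_{e'}(e)\;\le\;\bar a_L(e)+\bar a_e(e)\;\le\;C.\]
   Context: Constants: $\alpha\ge0$, $N>0$, $\beta>0$. Nodes lie in the Euclidean plane. A link is $e=(s_e,r_e,P_e)$ with transmitter, receiver, power $P_e>0$; $\mathcal{L}$ is the set of links. $d_e=d(s_e,r_e)$, $d_{e'e}=d(s_{e'},r_e)$, $S_e=P_e/d_e^\alpha$, $S_{e'e}=P_{e'}/d_{e'e}^\alpha$, $\gamma_e=\beta S_e/(S_e-\beta N)$. Affectances: $\hat a_{e'}(e)=S_{e'e}/S_e$, $a_{e'}(e)=\gamma_e\hat a_{e'}(e)$, $\bar a_{e'}(e)=\min\{1,a_{e'}(e)\}$, and $\bar a_L(e)=\sum_{e'\in L\setminus\{e\}}\bar a_{e'}(e)$. $L$ is SINR-feasible if $S_e/(N+\sum_{e'\in L\setminus\{e\}}S_{e'e})\ge\beta$ for all $e\in L$ (equivalently $\sum_{e'\in L\setminus\{e\}}a_{e'}(e)\le1$). Buckets: $S_{\min}=\min_{e\in\mathcal{L}}S_e$, $B_i=\{e\in\mathcal{L}:2^iS_{\min}\le S_e<2^{i+1}S_{\min}\}$. Standing assumption: there is a constant $\varepsilon>0$ with $S_e/N\ge(1+\varepsilon)\beta$ for all $e\in\mathcal{L}$. *)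

From HB Require Import structures.
From mathcomp Require Import all_boot all_order all_algebra.
From mathcomp Require Import reals exp.
Set Implicit Arguments. Unset Strict Implicit. Unset Printing Implicit Defensive.
Import Order.TTheory GRing.Theory Num.Theory.
Local Open Scope ring_scope.

Section SINR.
Variable R : realType.

Definition point := (R * R)%type.
Definition dist (p q : point) : R :=
  Num.sqrt ((p.1 - q.1) ^+ 2 + (p.2 - q.2) ^+ 2).

Definition link := (point * point * R)%type.
Definition sender (e : link) : point := e.1.1.
Definition receiver (e : link) : point := e.1.2.
Definition power (e : link) : R := e.2.

Variables (alpha beta N : R).

Definition d (e : link) : R := dist (sender e) (receiver e).
Definition dcross (e' e : link) : R := dist (sender e') (receiver e).
Definition S (e : link) : R := power e / (d e `^ alpha).
Definition Scross (e' e : link) : R := power e' / (dcross e' e `^ alpha).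
Definition gamma (e : link) : R := beta * S e / (S e - beta * N).

Definition ahat (e' e : link) : R := Scross e' e / S e.
Definition aff (e' e : link) : R := gamma e * ahat e' e.
Definition abar (e' e : link) : R := Num.min 1 (aff e' e).
Definition abarL (L : seq link) (e : link) : R :=
  \sum_(e' <- L | e' != e) abar e' e.

Definition feasible (L : seq link) : Prop :=
  forall e, e \in L ->
    beta <= S e / (N + \sum_(e' <- L | e' != e) Scross e' e).

Definition link0 : link := ((0, 0), (0, 0), 0).
Definition Smin (Lall : seq link) : R :=
  foldr (fun e m => Num.min (S e) m) (S (head link0 Lall)) Lall.

Definition in_bucket (Lall : seq link) (i : nat) (e : link) : bool :=
  [&& e \in Lall, 2 ^+ i * Smin Lall <= S e & S e < 2 ^+ i.+1 * Smin Lall].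

End SINR.

From HB Require Import structures.
From mathcomp Require Import all_boot all_order all_algebra.
From mathcomp Require Import reals exp.
From mathcomp Require Import ring lra.
Import Order.TTheory GRing.Theory Num.Theory.
Local Open Scope ring_scope.

(* Fix e and pick f in L minimising d(s_f, r_e) + d_f.  The triangle inequality
   gives d(s_e', r_f) <= 3 max(d(s_e', r_e), d_e') for every e' in L.  When
   d(s_e', r_e) is the larger one, S_e'e <= 3^alpha S_e'f; since gamma_e <=
   beta (1 + eps) / eps and S_e, S_f lie in the same bucket, a_e'(e) is at most a
   constant times S_e'f / S_f.  When d_e' is the larger one, S_e' <= 3^alpha S_e'f
   and S_f <= 2 S_e', so the trivial bound abar_e'(e) <= 1 is again at most a
   constant times S_e'f / S_f.  Summing over e' <> f, SINR-feasibility at f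
   bounds the total by that constant divided by beta. *)

Lemma seq_argmin {T : eqType} {disp : Order.disp_t} {U : orderType disp}
    (phi : T -> U) {s : seq T} {x0 : T} :
  x0 \in s -> exists2 f, f \in s & forall x, x \in s -> (phi f <= phi x)%O.
Proof.
elim: s x0 => // a s IH x0 _.
case: s IH => [|b s] IH.
  by exists a => [|x]; rewrite ?mem_head // inE => /eqP ->.
have [f fs fmin] := IH b (mem_head _ _).
have [af|fa] := leP (phi a) (phi f).
  exists a; first exact: mem_head.
  by move=> x; rewrite inE => /predU1P[-> //|/fmin]; apply: le_trans.
exists f; first by rewrite inE fs orbT.
by move=> x; rewrite inE => /predU1P[->|/fmin //]; apply: ltW.
Qed.

Lemma sum_le_sum_neq_add {R : numDomainType} {T : eqType} (F : T -> R)
    {s : seq T} (P : pred T) (x : T) :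
  uniq s -> (forall y, y \in s -> 0 <= F y) -> 0 <= F x ->
  \sum_(y <- s | P y) F y <= \sum_(y <- s | y != x) F y + F x.
Proof.
move=> us F0 Fx0.
apply: (@le_trans _ _ (\sum_(y <- s) F y)).
  rewrite [X in _ <= X](bigID P) /= lerDl.
  by rewrite big_seq_cond sumr_ge0 // => y /andP[/F0].
have [xs|xNs] := boolP (x \in s); first by rewrite (bigD1_seq x) //= addrC.
have -> : \sum_(y <- s) F y = \sum_(y <- s | y != x) F y.
  rewrite big_seq [RHS]big_seq_cond; apply: eq_bigl => y.
  by case ys: (y \in s) => //=; rewrite (memPn xNs).
by rewrite lerDl.
Qed.

Lemma cauchy_schwarz2 (R : rcfType) (u1 u2 v1 v2 : R) :
  u1 * v1 + u2 * v2 <= Num.sqrt (u1 ^+ 2 + u2 ^+ 2) * Num.sqrt (v1 ^+ 2 + v2 ^+ 2).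
Proof.
rewrite -sqrtrM ?addr_ge0 ?sqr_ge0 //.
have [uv_le0|uv_gt0] := lerP (u1 * v1 + u2 * v2) 0.
  exact: le_trans uv_le0 (sqrtr_ge0 _).
rewrite -(ger0_norm (ltW uv_gt0)) -sqrtr_sqr ler_sqrt; last first.
  by rewrite mulr_ge0 ?addr_ge0 ?sqr_ge0.
have -> : (u1 ^+ 2 + u2 ^+ 2) * (v1 ^+ 2 + v2 ^+ 2)
    = (u1 * v1 + u2 * v2) ^+ 2 + (u1 * v2 - u2 * v1) ^+ 2 by ring.
by rewrite lerDl sqr_ge0.
Qed.

Section Geometry.
Context {R : realType}.

Lemma dist_ge0 (p q : point R) : 0 <= dist p q.
Proof. exact: sqrtr_ge0. Qed.

Lemma dist_sym (p q : point R) : dist p q = dist q p.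
Proof. by rewrite /dist -(sqrrN (p.1 - q.1)) -(sqrrN (p.2 - q.2)) !opprB. Qed.

Lemma dist_triangle (p m q : point R) : dist p q <= dist p m + dist m q.
Proof.
have sqr_dist (x y : point R) : dist x y ^+ 2 = (x.1 - y.1) ^+ 2 + (x.2 - y.2) ^+ 2.
  by rewrite sqr_sqrtr // addr_ge0 ?sqr_ge0.
have cs : (p.1 - m.1) * (m.1 - q.1) + (p.2 - m.2) * (m.2 - q.2) <= dist p m * dist m q.
  exact: cauchy_schwarz2.
rewrite -[X in _ <= X]ger0_norm ?addr_ge0 ?dist_ge0 // -sqrtr_sqr ler_sqrt ?sqr_ge0 //.
rewrite [X in _ <= X]sqrrD !sqr_dist.
have -> : (p.1 - q.1) ^+ 2 + (p.2 - q.2) ^+ 2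
  = ((p.1 - m.1) ^+ 2 + (p.2 - m.2) ^+ 2) + ((m.1 - q.1) ^+ 2 + (m.2 - q.2) ^+ 2)
    + 2 * ((p.1 - m.1) * (m.1 - q.1) + (p.2 - m.2) * (m.2 - q.2)) by ring.
lra.
Qed.

End Geometry.

Lemma powR_div_le_scale (R : realType) (alpha P c a b : R) :
  0 <= alpha -> 0 <= P -> 0 < a -> 0 < b -> b <= c * a ->
  P / a `^ alpha <= c `^ alpha * (P / b `^ alpha).
Proof.
move=> alpha_ge0 P_ge0 a_gt0 b_gt0 b_le.
have c_gt0 : 0 < c by rewrite -(pmulr_lgt0 _ a_gt0) (lt_le_trans b_gt0).
have : b `^ alpha <= c `^ alpha * a `^ alpha.
  rewrite -powRM ?(ltW c_gt0) ?(ltW a_gt0) //; apply: ge0_ler_powR => //.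
  - by rewrite nnegrE ltW.
  - by rewrite nnegrE ltW // mulr_gt0.
move=> b_le_ca; rewrite mulrCA; apply: ler_wpM2l => //.
rewrite -invf_div lef_pV2 ?posrE ?divr_gt0 ?powR_gt0 //.
by rewrite ler_pdivrMr ?powR_gt0 // mulrC.
Qed.

Section Links.
Context {R : realType}.
Variables (alpha beta N : R).
Hypotheses (alpha_ge0 : 0 <= alpha) (beta_gt0 : 0 < beta) (N_gt0 : 0 < N).

Lemma S_gt0 {e : link R} : 0 < power e -> 0 < d e -> 0 < S alpha e.
Proof. by move=> P_gt0 d_gt0; rewrite divr_gt0 ?powR_gt0. Qed.

Lemma Scross_ge0 (e' e : link R) : 0 <= power e' -> 0 <= Scross alpha e' e.
Proof. by move=> P_ge0; rewrite divr_ge0 ?powR_ge0. Qed.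

Lemma S_le_Scross_scale {e' f : link R} :
  0 < power e' -> 0 < d e' -> 0 < dcross e' f -> dcross e' f <= 3 * d e' ->
  S alpha e' <= 3 `^ alpha * Scross alpha e' f.
Proof. by move=> P_gt0 d_gt0 df_gt0; apply: powR_div_le_scale => //; apply: ltW. Qed.

Lemma Scross_le_Scross_scale {e' e f : link R} :
  0 < power e' -> 0 < dcross e' e -> 0 < dcross e' f ->
  dcross e' f <= 3 * dcross e' e ->
  Scross alpha e' e <= 3 `^ alpha * Scross alpha e' f.
Proof. by move=> P_gt0 de_gt0 df_gt0; apply: powR_div_le_scale => //; apply: ltW. Qed.

Lemma dcross_triangle (e' e f : link R) :
  dcross e' f <= dcross e' e + dcross f e + d f.
Proof.
rewrite /dcross /d -addrA.
apply: le_trans (dist_triangle _ (receiver e) _) _; rewrite lerD2l.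
by apply: le_trans (dist_triangle _ (sender f) _) _; rewrite dist_sym.
Qed.

Lemma in_bucket_S_le {Lall : seq (link R)} {i : nat} {f g : link R} :
  in_bucket alpha Lall i f -> in_bucket alpha Lall i g -> S alpha f <= 2 * S alpha g.
Proof.
case/and3P=> _ _ Sf_lt /and3P[_ Sg_ge _].
by rewrite ltW // (lt_le_trans Sf_lt) // exprS -mulrA ler_wpM2l.
Qed.

Definition gamma_bound (eps : R) : R := beta * (1 + eps) / eps.

Lemma gamma_bound_ge0 {eps : R} : 0 < eps -> 0 <= gamma_bound eps.
Proof.
move=> eps_gt0.
exact: divr_ge0 (mulr_ge0 (ltW beta_gt0) (addr_ge0 ler01 (ltW eps_gt0))) (ltW eps_gt0).
Qed.

Lemma S_sub_noise_gt0 {eps : R} {e : link R} :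
  0 < eps -> (1 + eps) * beta * N <= S alpha e -> 0 < S alpha e - beta * N.
Proof.
move=> eps_gt0 Se_ge; have := mulr_gt0 (mulr_gt0 eps_gt0 beta_gt0) N_gt0; lra.
Qed.

Lemma gamma_ge0 {eps : R} {e : link R} :
  0 < eps -> (1 + eps) * beta * N <= S alpha e -> 0 <= gamma alpha beta N e.
Proof.
move=> eps_gt0 Se_ge; have gap_gt0 := S_sub_noise_gt0 eps_gt0 Se_ge.
have Se_gt0 : 0 < S alpha e by have := mulr_gt0 beta_gt0 N_gt0; lra.
by rewrite /gamma divr_ge0 // ltW // mulr_gt0.
Qed.

Lemma gamma_le_bound {eps : R} {e : link R} :
  0 < eps -> (1 + eps) * beta * N <= S alpha e -> gamma alpha beta N e <= gamma_bound eps.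
Proof.
move=> eps_gt0 Se_ge; have gap_gt0 := S_sub_noise_gt0 eps_gt0 Se_ge.
rewrite /gamma /gamma_bound ler_pdivrMr // mulrAC ler_pdivlMr //.
have -> : beta * (1 + eps) * (S alpha e - beta * N)
  = beta * S alpha e * eps + beta * (S alpha e - (1 + eps) * beta * N) by ring.
by rewrite lerDl mulr_ge0 ?subr_ge0 // ltW.
Qed.

Lemma abar_le1 (e' e : link R) : abar alpha beta N e' e <= 1.
Proof. by rewrite /abar ge_min lexx. Qed.

Lemma abar_ge0 (e' e : link R) :
  0 <= power e' -> 0 < S alpha e -> 0 <= gamma alpha beta N e ->
  0 <= abar alpha beta N e' e.
Proof.
move=> P_ge0 Se_gt0 g_ge0.
rewrite /abar le_min ler01 /= /aff /ahat mulr_ge0 //.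
exact: divr_ge0 (Scross_ge0 _ _ P_ge0) (ltW Se_gt0).
Qed.

Lemma feasible_sum_Scross_le (L : seq (link R)) (f : link R) :
  feasible alpha beta N L -> f \in L -> (forall e', e' \in L -> 0 <= power e') ->
  \sum_(e' <- L | e' != f) Scross alpha e' f <= S alpha f / beta.
Proof.
move=> feas fL P_ge0; have := feas f fL.
set I := \sum_(_ <- _ | _) _.
have I_ge0 : 0 <= I.
  by rewrite /I big_seq_cond sumr_ge0 // => e' /andP[/P_ge0 /Scross_ge0].
rewrite ler_pdivlMr ?ltr_wpDr // => feas_f.
have := mulr_gt0 beta_gt0 N_gt0.
by rewrite ler_pdivlMr //; nra.
Qed.

Definition abar_const (eps : R) : R := 2 * 3 `^ alpha * (gamma_bound eps + 1).

Lemma abar_const_ge0 {eps : R} : 0 < eps -> 0 <= abar_const eps.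
Proof.
move=> eps_gt0; rewrite /abar_const !mulr_ge0 ?powR_ge0 //.
by rewrite addr_ge0 ?gamma_bound_ge0.
Qed.

Lemma aff_le_Scross_near {eps : R} {e' e f : link R} :
  0 < eps -> (1 + eps) * beta * N <= S alpha e ->
  0 < S alpha f -> S alpha f <= 2 * S alpha e ->
  0 < power e' -> 0 < dcross e' e -> 0 < dcross e' f ->
  dcross e' f <= 3 * dcross e' e ->
  aff alpha beta N e' e <= 2 * 3 `^ alpha * gamma_bound eps * (Scross alpha e' f / S alpha f).
Proof.
move=> eps_gt0 Se_ge Sf_gt0 Sf_le P_gt0 de_gt0 df_gt0 df_le.
have Se_gt0 : 0 < S alpha e by rewrite -(pmulr_rgt0 _ (ltr0Sn R 1)) (lt_le_trans Sf_gt0).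
have Sc_e := Scross_le_Scross_scale P_gt0 de_gt0 df_gt0 df_le.
have inv_Se : (S alpha e)^-1 <= 2 / S alpha f.
  by rewrite ler_pdivlMr // mulrC ler_pdivrMr.
have -> : 2 * 3 `^ alpha * gamma_bound eps * (Scross alpha e' f / S alpha f)
  = gamma_bound eps * (3 `^ alpha * Scross alpha e' f * (2 / S alpha f)) by ring.
rewrite /aff /ahat; apply: ler_pM.
- exact: gamma_ge0 eps_gt0 Se_ge.
- exact: divr_ge0 (Scross_ge0 _ _ (ltW P_gt0)) (ltW Se_gt0).
- exact: gamma_le_bound eps_gt0 Se_ge.
- apply: ler_pM => //; first exact: Scross_ge0 _ _ (ltW P_gt0).
  by rewrite invr_ge0 ltW.
Qed.

Lemma abar_le_Scross {eps : R} {e' e f : link R} :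
  0 < eps -> (1 + eps) * beta * N <= S alpha e ->
  0 < S alpha f -> S alpha f <= 2 * S alpha e -> S alpha f <= 2 * S alpha e' ->
  0 < power e' -> 0 < d e' -> 0 < dcross e' e -> 0 < dcross e' f ->
  dcross f e + d f <= dcross e' e + d e' ->
  abar alpha beta N e' e <= abar_const eps * (Scross alpha e' f / S alpha f).
Proof.
move=> eps_gt0 Se_ge Sf_gt0 Sf_le_e Sf_le_e' P_gt0 d_gt0 de_gt0 df_gt0 f_closer.
have tri := dcross_triangle e' e f.
have ratio_ge0 : 0 <= Scross alpha e' f / S alpha f.
  exact: divr_ge0 (Scross_ge0 _ _ (ltW P_gt0)) (ltW Sf_gt0).
have K_ge0 := gamma_bound_ge0 eps_gt0.
have c_gt0 : 0 < 2 * 3 `^ alpha :> R by rewrite mulr_gt0 ?powR_gt0.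
have [near|far] := lerP (d e') (dcross e' e).
- have df_le : dcross e' f <= 3 * dcross e' e by lra.
  rewrite /abar ge_min; apply/orP; right.
  apply: le_trans (aff_le_Scross_near eps_gt0 Se_ge Sf_gt0 Sf_le_e P_gt0 de_gt0 df_gt0 df_le) _.
  by apply: ler_wpM2r => //; rewrite /abar_const mulrDr mulr1 lerDl ltW.
- have df_le : dcross e' f <= 3 * d e' by lra.
  have S_le := S_le_Scross_scale P_gt0 d_gt0 df_gt0 df_le.
  apply: le_trans (abar_le1 _ _) _.
  apply: (@le_trans _ _ (2 * 3 `^ alpha * (Scross alpha e' f / S alpha f))).
    by rewrite mulrA ler_pdivlMr // mul1r -mulrA (le_trans Sf_le_e') // ler_wpM2l.
  apply: ler_wpM2r => //; apply: ler_peMr; [exact: ltW | by rewrite lerDr].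
Qed.

Lemma abarL_le_bucket {eps : R} {Lall L : seq (link R)} {i : nat} {e : link R} :
  0 < eps -> uniq L ->
  (forall f, f \in Lall -> 0 < power f) ->
  (forall f f', f \in Lall -> f' \in Lall -> 0 < dcross f' f) ->
  (forall f, f \in Lall -> (1 + eps) * beta * N <= S alpha f) ->
  {subset L <= in_bucket alpha Lall i} -> feasible alpha beta N L ->
  in_bucket alpha Lall i e ->
  abarL alpha beta N L e <= 1 + abar_const eps / beta.
Proof.
move=> eps_gt0 uL P_gt0 d_gt0 above_noise LB feas eB.
have bucketP f : in_bucket alpha Lall i f -> f \in Lall by case/and3P.
have L_Lall f : f \in L -> f \in Lall by move/LB/bucketP.
have eA := bucketP e eB.
have M_ge0 : 0 <= abar_const eps / beta by rewrite divr_ge0 ?abar_const_ge0 ?ltW.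
have [L0|[f0 f0L]] : L = [::] \/ exists f0, f0 \in L.
  by case: (L) => [|f0 L']; [left | right; exists f0; rewrite mem_head].
  by rewrite L0 /abarL big_nil; lra.
have [f fL f_closest] := seq_argmin (fun x => dcross x e + d x) f0L.
have fA := L_Lall f fL.
have Se_gt0 : 0 < S alpha e := S_gt0 (P_gt0 e eA) (d_gt0 e e eA eA).
have Sf_gt0 : 0 < S alpha f := S_gt0 (P_gt0 f fA) (d_gt0 f f fA fA).
have g_ge0 := gamma_ge0 eps_gt0 (above_noise e eA).
have abar_e_ge0 e' : e' \in L -> 0 <= abar alpha beta N e' e.
  by move=> /L_Lall /P_gt0 /ltW P_ge0; apply: abar_ge0.
apply: le_trans (sum_le_sum_neq_add _ (fun e' => e' != e) f uL abar_e_ge0 (abar_e_ge0 f fL)) _.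
rewrite addrC lerD ?abar_le1 //.
apply: (@le_trans _ _ (\sum_(e' <- L | e' != f)
                         abar_const eps * (Scross alpha e' f / S alpha f))).
  rewrite big_seq_cond [X in _ <= X]big_seq_cond; apply: ler_sum => e' /andP[e'L _].
  have e'A := L_Lall e' e'L.
  exact: abar_le_Scross eps_gt0 (above_noise e eA) Sf_gt0
    (in_bucket_S_le (LB f fL) eB) (in_bucket_S_le (LB f fL) (LB e' e'L))
    (P_gt0 e' e'A) (d_gt0 e' e' e'A e'A) (d_gt0 e e' eA e'A) (d_gt0 f e' fA e'A)
    (f_closest e' e'L).
rewrite -mulr_sumr -mulr_suml ler_wpM2l ?abar_const_ge0 //.
rewrite ler_pdivrMr // mulrC.
by apply: feasible_sum_Scross_le => // e' /L_Lall /P_gt0 /ltW.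
Qed.

End Links.

Theorem theorem1 (R : realType) (alpha beta eps : R) :
  0 <= alpha -> 0 < beta -> 0 < eps ->
  exists C : R,
    forall (N : R) (Lall L : seq (link R)) (i : nat) (e : link R),
      0 < N ->
      uniq Lall ->
      (forall f, f \in Lall -> 0 < power f) ->
      (forall f f', f \in Lall -> f' \in Lall -> 0 < dcross f' f) ->
      (forall f, f \in Lall -> (1 + eps) * beta <= S alpha f / N) ->
      uniq L ->
      {subset L <= in_bucket alpha Lall i} ->
      feasible alpha beta N L ->
      in_bucket alpha Lall i e ->
      \sum_(e' <- L | d e <= d e') abar alpha beta N e' e
        <= abarL alpha beta N L e + abar alpha beta N e e
      /\ abarL alpha beta N L e + abar alpha beta N e e <= C.
Proof.
move=> alpha_ge0 beta_gt0 eps_gt0.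
exists (2 + abar_const alpha beta eps / beta).
move=> N Lall L i e N_gt0 _ P_gt0 d_gt0 noise uL LB feas eB.
have above_noise f : f \in Lall -> (1 + eps) * beta * N <= S alpha f.
  by move=> fA; rewrite -ler_pdivlMr // noise.
have eA : e \in Lall by case/and3P: eB.
have abar_e_ge0 e' : e' \in Lall -> 0 <= abar alpha beta N e' e.
  move=> /P_gt0 /ltW P_ge0; apply: abar_ge0 => //.
  - exact: S_gt0 (P_gt0 e eA) (d_gt0 e e eA eA).
  - exact: gamma_ge0 eps_gt0 (above_noise e eA).
split.
  apply: sum_le_sum_neq_add => // [e' /LB /and3P[e'A _ _]|]; exact: abar_e_ge0.
have := abarL_le_bucket alpha beta N alpha_ge0 beta_gt0 N_gt0 eps_gt0 uL P_gt0 d_gt0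
  above_noise LB feas eB.
have := abar_le1 alpha beta N e e.
lra.
Qed.
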